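(* Let $N\ge1$, let $G=(\mathcal{V},\mathcal{E},P_V)$ and $\tilde G_i=(\mathcal{V}_i,\mathcal{E}_i,P_{V_i})$, $i\le N$, be probabilistic graphs with $G=\bigsqcup_{i\le N}\tilde G_i$ and $\tilde G_1\simeq\tilde G_2\simeq\dots\simeq\tilde G_N$. Then $H_\chi(G)=H_\chi(\tilde G_1)$.
   Context: A probabilistic graph is $(\mathcal{V},\mathcal{E},P_V)$: a finite graph with a probability distribution $P_V$ on its vertices. A coloring is a map $c$ from the vertices to a finite set such that adjacent vertices get different colors; $H_\chi(G)=\inf\{H(c(V)):c\text{ a coloring of }G\}$ with $V\sim P_V$. $G=\bigsqcup_{i\le N}\tilde G_i$ (disjoint union) means: $\mathcal{V}$ is the disjoint union of the $\mathcal{V}_i$; for $v\in\mathcal{V}_i$, $v'\in\mathcal{V}_{i'}$, if $i=i'$ then $vv'\in\mathcal{E}\iff vv'\in\mathcal{E}_i$, and if $i\ne i'$ then $vv'\notin\mathcal{E}$; and $P_{V\mid V\in\mathcal{V}_i}=P_{V_i}$ for all $i$. $G_1\simeq G_2$ (isomorphic probabilistic graphs) means there is a bijection $\psi:\mathcal{V}_1\to\mathcal{V}_2$ with $v v'\in\mathcal{E}_1\iff\psi(v)\psi(v')\in\mathcal{E}_2$ and $P_{V_1}(v)=P_{V_2}(\psi(v))$ for all $v$. *)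

From HB Require Import structures.
From mathcomp Require Import all_boot all_order all_algebra.
From mathcomp Require Import all_classical all_reals all_analysis.
Set Implicit Arguments. Unset Strict Implicit. Unset Printing Implicit Defensive.
Import Order.TTheory GRing.Theory Num.Theory.
Local Open Scope classical_set_scope.
Local Open Scope ring_scope.

Definition is_pgraph (R : realType) (T : finType) (e : rel T) (P : T -> R) : Prop :=
  symmetric e /\ irreflexive e /\ (forall v, 0 <= P v) /\ \sum_(v : T) P v = 1.

(* A coloring: adjacent vertices receive different colors.  Colors are natural
   numbers; since T is finite, any such map has a finite image. *)
Definition is_coloring (T : finType) (e : rel T) (c : T -> nat) : Prop :=
  forall u v, e u v -> c u != c v.

Definition pushmass (R : realType) (T : finType) (P : T -> R) (c : T -> nat) (y : nat) : R :=
  \sum_(v : T | c v == y) P v.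

(* Shannon entropy (natural log, 0 log 0 = 0 since ln 0 = 0) of c(V). *)
Definition entropy (R : realType) (T : finType) (P : T -> R) (c : T -> nat) : R :=
  - \sum_(y <- undup [seq c v | v <- enum T]) pushmass P c y * ln (pushmass P c y).

Definition chrom_entropy (R : realType) (T : finType) (e : rel T) (P : T -> R) : R :=
  inf [set entropy P c | c in [set c : T -> nat | is_coloring e c]].

Definition pg_iso (R : realType) (T1 T2 : finType) (e1 : rel T1) (P1 : T1 -> R)
    (e2 : rel T2) (P2 : T2 -> R) : Prop :=
  exists psi : T1 -> T2, bijective psi /\
    (forall u v, e1 u v = e2 (psi u) (psi v)) /\ (forall v, P1 v = P2 (psi v)).

(* G = disjoint union of the G_i (i < N): the vertex set of G is the disjoint
   union of the (embedded) vertex sets of the G_i, edges inside a part are those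
   of G_i, there are no edges between distinct parts, and the conditional law of
   V given V in V_i is P_{V_i} (which requires P(V in V_i) > 0). *)
Definition pg_disjoint_union (R : realType) (N : nat) (T : finType) (e : rel T) (P : T -> R)
    (Ti : 'I_N -> finType) (ei : forall i, rel (Ti i)) (Pi : forall i, Ti i -> R) : Prop :=
  exists emb : forall i, Ti i -> T,
    (forall i, injective (emb i)) /\
    (forall i j (x : Ti i) (y : Ti j), emb i x = emb j y -> i = j) /\
    (forall v, exists i, exists x : Ti i, emb i x = v) /\
    (forall i (x y : Ti i), e (emb i x) (emb i y) = ei i x y) /\
    (forall i j (x : Ti i) (y : Ti j), i != j -> ~~ e (emb i x) (emb j y)) /\
    (forall i, 0 < \sum_(x : Ti i) P (emb i x) /\
       forall x : Ti i, Pi i x = P (emb i x) / \sum_(x' : Ti i) P (emb i x')).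

From HB Require Import structures.
From mathcomp Require Import all_boot all_order all_algebra.
From mathcomp Require Import all_classical all_reals all_analysis.
From mathcomp Require Import lra.
Import Order.TTheory GRing.Theory Num.Theory.
Local Open Scope ring_scope.

(* A coloring d of G_1 lifts, through the isomorphisms G_i ~ G_1, to a coloring
   of G whose color c(V) has the same law as d(V_1); hence H_chi(G) <= H_chi(G_1).
   Conversely, if c colors G and p_i is the mass of the i-th part, then H(c(V))
   is the p-average of the cross entropies of c restricted to G_i against the law
   of c(V); by Gibbs' inequality each of them is at least H(c(V_i)), which is at
   least H_chi(G_i) = H_chi(G_1). *)

Lemma tagged_emb_bij {I T : finType} {Ti : I -> finType} {emb : forall i, Ti i -> T} :
  (forall i, injective (emb i)) -> (forall i j x y, emb i x = emb j y -> i = j) ->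
  (forall v, exists i, exists x, emb i x = v) ->
  bijective (fun x : {i : I & Ti i} => emb (tag x) (tagged x)).
Proof.
move=> emb_inj emb_disj emb_surj.
have tagged_inj : injective (fun x : {i : I & Ti i} => emb (tag x) (tagged x)).
  move=> [i x] [j y] /= xy; have ij := emb_disj _ _ _ _ xy; subst j.
  by rewrite (emb_inj _ _ _ xy).
apply: (inj_card_bij tagged_inj); rewrite -(card_codom tagged_inj) subset_leq_card //.
apply/fintype.subsetP => v _; have [i [x <-]] := emb_surj v.
exact: (codom_f _ (Tagged Ti x)).
Qed.

Section ChromaticEntropy.
Context {R : realType}.
Implicit Types (T A : finType).

Lemma entropyE {T} (P : T -> R) (c : T -> nat) :
  entropy P c = - \sum_(v : T) P v * ln (pushmass P c (c v)).
Proof.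
rewrite /entropy; congr (- _).
set s := undup _.
transitivity (\sum_(y <- s) \sum_(v : T)
   (if c v == y then P v * ln (pushmass P c (c v)) else 0)).
  apply: eq_bigr => y _; rewrite /pushmass big_distrl /= big_mkcond /=.
  by apply: eq_bigr => v _; case: eqP => // ->.
rewrite exchange_big /=; apply: eq_bigr => v _.
rewrite (bigD1_seq (c v)) /=; last exact: undup_uniq.
  by rewrite eqxx big1 ?addr0 // => y; rewrite eq_sym => /negbTE ->.
by rewrite mem_undup map_f ?mem_enum.
Qed.

Lemma pushmassE {T} (P : T -> R) (c : T -> nat) y :
  pushmass P c y = \sum_v P v * (c v == y)%:R.
Proof. by rewrite /pushmass big_mkcond; apply: eq_bigr => v _; rewrite mulr_natr mulrb. Qed.

Lemma le_pushmass {T} {P : T -> R} (c : T -> nat) v :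
  (forall v, 0 <= P v) -> P v <= pushmass P c (c v).
Proof.
move=> P0; rewrite /pushmass (bigD1 v) ?eqxx //= lerDl.
by apply: sumr_ge0 => *; apply: P0.
Qed.

Lemma pushmass_le_sum {T} {P : T -> R} (c : T -> nat) y :
  (forall v, 0 <= P v) -> pushmass P c y <= \sum_v P v.
Proof.
move=> P0; rewrite /pushmass big_mkcond /=; apply: ler_sum => v _.
by case: ifP => // _; apply: P0.
Qed.

Lemma entropy_ge0 {T} {P : T -> R} (c : T -> nat) :
  (forall v, 0 <= P v) -> \sum_v P v = 1 -> 0 <= entropy P c.
Proof.
move=> P0 P1; rewrite entropyE oppr_ge0; apply: sumr_le0 => v _.
by apply: mulr_ge0_le0 => //; apply: ln_le0; rewrite -P1 pushmass_le_sum.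
Qed.

Lemma entropy_comp {A T} {P : T -> R} {Q : A -> R} {g : T -> A} (c : A -> nat) :
  (forall a, \sum_(v | g v == a) P v = Q a) -> entropy P (c \o g) = entropy Q c.
Proof.
move=> law.
have sum_law (F : A -> R) : \sum_v P v * F (g v) = \sum_a Q a * F a.
  rewrite (partition_big g xpredT) //=; apply: eq_bigr => a _.
  by rewrite -law big_distrl; apply: eq_bigr => v /eqP ->.
have pushmass_comp y : pushmass P (c \o g) y = pushmass Q c y.
  by rewrite !pushmassE -(sum_law (fun a => (c a == y)%:R)).
rewrite !entropyE -(sum_law (fun a => ln (pushmass Q c (c a)))).
by under eq_bigr do rewrite pushmass_comp.
Qed.

Lemma sum_pushmass_ratio_le {T A} {P : T -> R} {Q : A -> R} (f : T -> A)
    (c : A -> nat) :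
  (forall x, 0 <= P x) -> (forall v, 0 <= Q v) ->
  \sum_x P x * (pushmass Q c (c (f x)) / pushmass P (c \o f) (c (f x)))
    <= \sum_v Q v.
Proof.
move=> P0 Q0; set m := pushmass P (c \o f).
have -> : \sum_x P x * (pushmass Q c (c (f x)) / m (c (f x))) =
          \sum_v Q v * (m (c v) / m (c v)).
  under eq_bigr do rewrite pushmassE mulrCA mulr_suml.
  rewrite exchange_big /=; apply: eq_bigr => v _.
  rewrite {1}[m _]pushmassE mulr_suml mulr_sumr; apply: eq_bigr => x _ /=.
  by rewrite eq_sym; case: eqP => [->|_]; rewrite ?mulr1n ?mulr0n ?(mulr1, mulr0, mul0r).
apply: ler_sum => v _; apply: ler_piMr => //.
by have [->|m_neq0] := eqVneq (m (c v)) 0; rewrite ?mul0r ?divff.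
Qed.

Lemma ln_le_subr1 {z : R} : 0 < z -> ln z <= z - 1.
Proof. by move=> z_gt0; have := @le_ln1Dx R (z - 1); rewrite subrKC; apply; lra. Qed.

Lemma entropy_le_cross {T A} {P : T -> R} {Q : A -> R} (f : T -> A) (c : A -> nat) :
  (forall x, 0 <= P x) -> (forall v, 0 <= Q v) -> \sum_v Q v <= \sum_x P x ->
  (forall x, 0 < P x -> 0 < Q (f x)) ->
  entropy P (c \o f) <= - \sum_x P x * ln (pushmass Q c (c (f x))).
Proof.
move=> P0 Q0 sumQP Q_gt0; rewrite entropyE lerN2 -subr_ge0 -sumrB.
set m := pushmass P (c \o f); set q := pushmass Q c.
apply: le_trans (_ : 0 <= \sum_x (P x - P x * (q (c (f x)) / m (c (f x))))) _.
  by rewrite sumrB subr_ge0 (le_trans _ sumQP) ?sum_pushmass_ratio_le.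
apply: ler_sum => x _ /=; rewrite -mulrBr.
have := P0 x; rewrite le_eqVlt => /orP[/eqP <-|Px_gt0]; first by rewrite !mul0r.
have m_gt0 : 0 < m (c (f x)) by apply: lt_le_trans Px_gt0 (le_pushmass (c \o f) x P0).
have q_gt0 : 0 < q (c (f x)).
  exact: lt_le_trans (Q_gt0 _ Px_gt0) (le_pushmass c (f x) Q0).
have := ln_le_subr1 (divr_gt0 q_gt0 m_gt0); rewrite ln_div ?posrE // => ln_le.
have := ler_wpM2l (ltW Px_gt0) ln_le; lra.
Qed.

Definition pg_hom {T1 T2} (e1 : rel T1) (P1 : T1 -> R) (e2 : rel T2) (P2 : T2 -> R)
    (f : T1 -> T2) : Prop :=
  (forall u v, e1 u v -> e2 (f u) (f v)) /\ (forall b, \sum_(v | f v == b) P1 v = P2 b).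

Lemma chrom_entropy_le {T} {e : rel T} {P : T -> R} {c : T -> nat} :
  is_pgraph e P -> is_coloring e c -> chrom_entropy e P <= entropy P c.
Proof.
move=> [_ [_ [P0 P1]]] c_col; apply: ge_inf; last by exists c.
by exists 0 => _ [d _ <-]; apply: entropy_ge0.
Qed.

Lemma lb_le_chrom_entropy {T} {e : rel T} {P : T -> R} {h : R} :
  is_pgraph e P -> (forall c, is_coloring e c -> h <= entropy P c) ->
  h <= chrom_entropy e P.
Proof.
move=> [_ [e_irr _]] h_lb; apply: lb_le_inf => [|_ [c c_col <-]]; last exact: h_lb.
exists (entropy P (fun v => enum_rank v : nat)), (fun v => enum_rank v : nat) => //.
by move=> u v uv; apply: contraTneq uv => /val_inj/enum_rank_inj ->; rewrite e_irr.
Qed.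

Lemma chrom_entropy_hom {T1 T2} {e1 : rel T1} {P1 : T1 -> R} {e2 : rel T2}
    {P2 : T2 -> R} {f : T1 -> T2} :
  is_pgraph e1 P1 -> is_pgraph e2 P2 -> pg_hom e1 P1 e2 P2 f ->
  chrom_entropy e1 P1 <= chrom_entropy e2 P2.
Proof.
move=> pg1 pg2 [f_hom f_law]; apply: lb_le_chrom_entropy => // d d_col.
rewrite -(entropy_comp d f_law); apply: chrom_entropy_le => // u v /f_hom.
exact: d_col.
Qed.

Lemma sum_pred_can {T1 T2} {f : T1 -> T2} {g : T2 -> T1} (F : T1 -> R) y :
  cancel f g -> cancel g f -> \sum_(x | f x == y) F x = F (g y).
Proof. by move=> fK gK; rewrite (eq_bigl _ _ (fun x => can2_eq fK gK x y)) big_pred1_eq. Qed.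

Lemma pg_iso_sym {T1 T2} {e1 : rel T1} {P1 : T1 -> R} {e2 : rel T2} {P2 : T2 -> R} :
  pg_iso e1 P1 e2 P2 -> pg_iso e2 P2 e1 P1.
Proof.
move=> [psi [[phi psiK phiK] [psi_e psi_P]]]; exists phi; split; first by exists psi.
by split=> [u v|v]; rewrite ?psi_e ?psi_P !phiK.
Qed.

Lemma pg_iso_hom {T1 T2} {e1 : rel T1} {P1 : T1 -> R} {e2 : rel T2} {P2 : T2 -> R} :
  pg_iso e1 P1 e2 P2 -> exists f, pg_hom e1 P1 e2 P2 f.
Proof.
move=> [psi [[phi psiK phiK] [psi_e psi_P]]]; exists psi.
by split=> [u v|b]; rewrite ?psi_e // (sum_pred_can _ _ psiK phiK) psi_P phiK.
Qed.

Lemma chrom_entropy_iso {T1 T2} {e1 : rel T1} {P1 : T1 -> R} {e2 : rel T2}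
    {P2 : T2 -> R} :
  is_pgraph e1 P1 -> is_pgraph e2 P2 -> pg_iso e1 P1 e2 P2 ->
  chrom_entropy e1 P1 = chrom_entropy e2 P2.
Proof.
move=> pg1 pg2 iso; have [f f_hom] := pg_iso_hom iso.
have [g g_hom] := pg_iso_hom (pg_iso_sym iso).
by apply/le_anti; rewrite (chrom_entropy_hom _ _ f_hom) ?(chrom_entropy_hom _ _ g_hom).
Qed.

Section DisjointUnion.
Context {I T : finType} {e : rel T} {P : T -> R}.
Context {Ti : I -> finType} {ei : forall i, rel (Ti i)} {Pi : forall i, Ti i -> R}.
Context {emb : forall i, Ti i -> T} {p : I -> R}.
Hypothesis emb_bij : bijective (fun x : {i : I & Ti i} => emb (tag x) (tagged x)).
Hypothesis e_emb : forall i (x y : Ti i), e (emb i x) (emb i y) = ei i x y.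
Hypothesis e_emb_out : forall i j (x : Ti i) (y : Ti j), i != j -> ~~ e (emb i x) (emb j y).
Hypothesis P_emb : forall i x, P (emb i x) = p i * Pi i x.

Lemma sum_union (F : T -> R) : \sum_v F v = \sum_i \sum_(x : Ti i) F (emb i x).
Proof.
rewrite (sig_big_dep xpredT (fun i => xpredT) (fun i x => F (emb i x))) /=.
by rewrite (reindex _ (onW_bij _ emb_bij)).
Qed.

Lemma le_chrom_entropy_union :
  is_pgraph e P -> (forall i, is_pgraph (ei i) (Pi i)) -> (forall i, 0 < p i) ->
  \sum_i p i * chrom_entropy (ei i) (Pi i) <= chrom_entropy e P.
Proof.
move=> pg pgi p_gt0; apply: lb_le_chrom_entropy => // c c_col.
have [_ [_ [P0 P1]]] := pg.
have part_le i : chrom_entropy (ei i) (Pi i)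
    <= - \sum_x Pi i x * ln (pushmass P c (c (emb i x))).
  have [_ [_ [Pi0 Pi1]]] := pgi i.
  apply: le_trans (entropy_le_cross (emb i) c Pi0 P0 _ _).
    by apply: chrom_entropy_le => // x y; rewrite -e_emb; apply: c_col.
    by rewrite P1 Pi1.
  by move=> x Pix_gt0; rewrite P_emb mulr_gt0.
rewrite entropyE sum_union -sumrN; apply: ler_sum => i _.
rewrite (le_trans (ler_wpM2l (ltW (p_gt0 i)) (part_le i))) // mulrN mulr_sumr.
by under eq_bigr do rewrite mulrA -P_emb.
Qed.

Lemma pg_hom_union {A : finType} {eA : rel A} {PA : A -> R}
    {phi : forall i, Ti i -> A} :
  \sum_i p i = 1 -> (forall i, pg_hom (ei i) (Pi i) eA PA (phi i)) ->
  exists g, pg_hom e P eA PA g.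
Proof.
move=> p1 phi_hom; have [dec embK decK] := emb_bij.
exists (fun v => phi (tag (dec v)) (tagged (dec v))); split=> [u v|a].
  rewrite -(decK u) -(decK v); case: (dec u) (dec v) => [i x] [j y] /=.
  rewrite !(embK (Tagged _ _)) /=; have [ij|ij] := eqVneq i j.
    by subst j; rewrite e_emb; apply: (phi_hom i).1.
  by move=> xy; have := e_emb_out _ _ x y ij; rewrite xy.
rewrite big_mkcond sum_union -[RHS]mul1r -p1 mulr_suml; apply: eq_bigr => i _.
rewrite -(phi_hom i).2 mulr_sumr [RHS]big_mkcond; apply: eq_bigr => x _ /=.
by rewrite (embK (Tagged _ _)) /= P_emb; case: ifP; rewrite ?mulr0.
Qed.

End DisjointUnion.

End ChromaticEntropy.

Theorem lemma2 (R : realType) (n : nat) (T : finType) (e : rel T) (P : T -> R)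
    (Ti : 'I_n.+1 -> finType) (ei : forall i, rel (Ti i)) (Pi : forall i, Ti i -> R) :
  is_pgraph e P ->
  (forall i, is_pgraph (ei i) (Pi i)) ->
  pg_disjoint_union e P ei Pi ->
  (forall i, pg_iso (ei ord0) (Pi ord0) (ei i) (Pi i)) ->
  chrom_entropy e P = chrom_entropy (ei ord0) (Pi ord0).
Proof.
move=> pg pgi [emb [emb_inj [emb_disj [emb_surj [e_emb [e_emb_out P_parts]]]]]] iso.
pose p i := \sum_(x : Ti i) P (emb i x).
have p_gt0 i : 0 < p i by have [] := P_parts i.
have P_emb i x : P (emb i x) = p i * Pi i x.
  by have [p_pos ->] := P_parts i; rewrite /p mulrC divfK ?gt_eqF.
have emb_bij := tagged_emb_bij emb_inj emb_disj emb_surj.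
have p1 : \sum_i p i = 1 by have [_ [_ [_ <-]]] := pg; rewrite (sum_union emb_bij).
have [phi phi_hom] := fin_all_exists (fun i => pg_iso_hom (pg_iso_sym (iso i))).
have [g g_hom] := pg_hom_union emb_bij e_emb e_emb_out P_emb p1 phi_hom.
apply/le_anti; rewrite (chrom_entropy_hom pg (pgi ord0) g_hom) /=.
rewrite -[X in X <= _]mul1r -p1 mulr_suml.
apply: le_trans (le_chrom_entropy_union emb_bij e_emb P_emb pg pgi p_gt0).
by apply: ler_sum => i _; rewrite (chrom_entropy_iso (pgi ord0) (pgi i) (iso i)).
Qed.
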